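(* Let $\mathbb{F}$ be a finite field, $d,D\ge 0$ integers, $\gamma>0$, $f:\mathbb{F}^2\to\mathbb{F}$. For $a\in\mathbb{F}$ let $C_a(y)$ be a best-fit degree-$d$ polynomial for $f$ on the vertical line $\{(a,y):y\in\mathbb{F}\}$, and for $b\in\mathbb{F}$ let $R_b(x)$ be a best-fit degree-$d$ polynomial for $f$ on the horizontal line $\{(x,b):x\in\mathbb{F}\}$. Let $H\subseteq\mathbb{F}^2$ be such that $C_a(b)=R_b(a)=f(a,b)$ for all $(a,b)\in H$. Let $S_1,S_2\subseteq\mathbb{F}$ with $S_1\neq\emptyset$ be such that for every $b\in S_2$, $|\{a\in S_1:(a,b)\in H\}|\ge\frac{\gamma}{2}|S_1|$, and suppose $D<\frac{\gamma}{2}|S_1|$. If $A(x,y,z)\in\mathbb{F}[x,y,z]$ has $(1,1,d)$-weighted degree at most $D$ and $A(a,y,C_a(y))\equiv 0$ for all $a\in S_1$, then $A(a,b,f(a,b))=0$ for all $(a,b)\in H$ with $b\in S_2$.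
   Context: The $(1,1,d)$-weighted degree of $A(x,y,z)$ is the maximum of $i+j+dk$ over monomials $x^iy^jz^k$ with non-zero coefficient. A best-fit degree-$d$ polynomial for $f$ on a line is a univariate polynomial of degree at most $d$ (in the line parameter) agreeing with $f$ on the maximum number of points of the line. *)

From HB Require Import structures.
From mathcomp Require Import all_boot all_order all_algebra.
From mathcomp Require Import mpoly.
Set Implicit Arguments. Unset Strict Implicit. Unset Printing Implicit Defensive.
Import Order.TTheory GRing.Theory Num.Theory.
Local Open Scope ring_scope.

(* The three variables x, y, z of F[x,y,z] are 'X_0, 'X_1, 'X_2 in {mpoly F[3]}. *)
Definition i0 : 'I_3 := @Ordinal 3 0 isT.
Definition i1 : 'I_3 := @Ordinal 3 1 isT.
Definition i2 : 'I_3 := @Ordinal 3 2 isT.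

Definition pt3 (T : Type) (x y z : T) : 'I_3 -> T :=
  fun i => nth x [:: x; y; z] (nat_of_ord i).

Definition wdeg (d : nat) (m : 'X_{1..3}) : nat := (m i0 + m i1 + d * m i2)%N.

Definition wdeg_le (F : ringType) (d D : nat) (A : {mpoly F[3]}) : Prop :=
  forall m, m \in msupp A -> (wdeg d m <= D)%N.

Definition agree (F : finFieldType) (g : F -> F) (p : {poly F}) : nat :=
  #|[set t : F | p.[t] == g t]|.

(* p is a best-fit degree-d polynomial for g (the restriction of f to a line,
   parametrized by t) *)
Definition best_fit (F : finFieldType) (d : nat) (g : F -> F) (p : {poly F}) : Prop :=
  (size p <= d.+1)%N /\
  forall q : {poly F}, (size q <= d.+1)%N -> (agree g q <= agree g p)%N.

(* A(a, y, c(y)) as a univariate polynomial in y *)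
Definition subst_col (F : finFieldType) (A : {mpoly F[3]}) (a : F) (c : {poly F})
  : {poly F} :=
  meval (pt3 a%:P 'X c) (map_mpoly (fun u : F => u%:P) A).

From HB Require Import structures.
From mathcomp Require Import all_boot all_order all_algebra.
From mathcomp Require Import mpoly.
From mathcomp Require Import zify.
Set Implicit Arguments.
Unset Strict Implicit.
Unset Printing Implicit Defensive.
Import Order.TTheory GRing.Theory Num.Theory.
Local Open Scope ring_scope.

(* Fix b in S2.  The row restriction P(x) := A(x, b, R_b(x)) has degree at
   most D, since A has (1,1,d)-weighted degree at most D and R_b has degree at
   most d.  For a in S1 with (a, b) in H we have R_b(a) = f(a, b) = C_a(b), so
   P(a) = A(a, b, C_a(b)) = 0 because A(a, y, C_a(y)) vanishes identically.
   There are more than D such a, hence P = 0, and P(a) = A(a, b, f(a, b))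
   for every (a, b) in H. *)

Definition subst_row (R : comNzRingType) (A : {mpoly R[3]}) (b : R)
  (r : {poly R}) : {poly R} :=
  meval (pt3 'X b%:P r) (map_mpoly (fun u : R => u%:P) A).

Lemma meval_map_polyC (R : comNzRingType) n (v : 'I_n -> {poly R})
    (A : {mpoly R[n]}) :
  meval v (map_mpoly (fun u : R => u%:P) A) =
  \sum_(m <- msupp A) (A@_m)%:P * \prod_i v i ^+ m i.
Proof.
rewrite mevalE (perm_big _ (msupp_map_mpoly _ (@polyC_inj R))) /=.
by apply: eq_bigr => m _; rewrite mcoeff_map_mpoly.
Qed.

Lemma horner_meval_polyC (R : comNzRingType) n (v : 'I_n -> {poly R})
    (A : {mpoly R[n]}) t :
  (meval v (map_mpoly (fun u : R => u%:P) A)).[t] =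
  meval (fun i => (v i).[t]) A.
Proof.
rewrite meval_map_polyC mevalE horner_sum; apply: eq_bigr => m _.
rewrite hornerM hornerC horner_prod; congr (_ * _).
by apply: eq_bigr => i _; rewrite horner_exp.
Qed.

Lemma pt3_comp (T U : Type) (g : T -> U) (x y z : T) :
  (fun i => g (pt3 x y z i)) =1 pt3 (g x) (g y) (g z).
Proof. by case=> [[|[|[|k]]] ?]. Qed.

Lemma prod_pt3 (R : comNzRingType) (x y z : R) (m : 'X_{1..3}) :
  \prod_i pt3 x y z i ^+ m i = x ^+ m i0 * y ^+ m i1 * z ^+ m i2.
Proof.
rewrite !big_ord_recl big_ord0 mulr1 mulrA.
by congr (_ ^+ m _ * _ ^+ m _ * _ ^+ m _); apply: val_inj.
Qed.

Lemma horner_subst_col (F : finFieldType) (A : {mpoly F[3]}) a c t :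
  (subst_col A a c).[t] = meval (pt3 a t c.[t]) A.
Proof.
rewrite horner_meval_polyC (meval_eq _ (pt3_comp (horner^~ t) _ _ _)).
by rewrite hornerC hornerX.
Qed.

Lemma horner_subst_row (R : comNzRingType) (A : {mpoly R[3]}) b r t :
  (subst_row A b r).[t] = meval (pt3 t b r.[t]) A.
Proof.
rewrite horner_meval_polyC (meval_eq _ (pt3_comp (horner^~ t) _ _ _)).
by rewrite hornerX hornerC.
Qed.

Lemma size_mul_le (R : nzRingType) (p q : {poly R}) k l :
  (size p <= k.+1)%N -> (size q <= l.+1)%N -> (size (p * q)%R <= (k + l).+1)%N.
Proof. by move=> hp hq; have := size_polyMleq p q; lia. Qed.

Lemma size_exp_le (R : nzRingType) (p : {poly R}) k n :
  (size p <= k.+1)%N -> (size (p ^+ n) <= (k * n).+1)%N.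
Proof.
move=> hp; elim: n => [|n IHn]; first by rewrite expr0 size_poly1.
by rewrite exprS mulnS; apply: size_mul_le.
Qed.

Lemma size_subst_row (R : comNzRingType) (d D : nat) (A : {mpoly R[3]}) b
    (r : {poly R}) :
  wdeg_le d D A -> (size r <= d.+1)%N -> (size (subst_row A b r) <= D.+1)%N.
Proof.
move=> hA hr; rewrite /subst_row meval_map_polyC big_seq; elim/big_ind: _ => //.
- by rewrite size_poly0.
- by move=> p q hp hq; rewrite (leq_trans (size_polyD p q)) // geq_max hp hq.
move=> m /hA; rewrite /wdeg prod_pt3 => hm.
have hX : (size ('X ^+ m i0 : {poly R}) <= (m i0).+1)%N by rewrite size_polyXn.
have hb := size_exp_le (m i1) (size_polyC_leq1 b).
have hz := size_exp_le (m i2) hr.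
have := size_mul_le (size_polyC_leq1 A@_m) (size_mul_le (size_mul_le hX hb) hz).
move/leq_trans; apply; lia.
Qed.

Lemma poly_eq0_card_roots (R : finIdomainType) (p : {poly R}) (T : {set R}) :
  {in T, forall x, root p x} -> (size p <= #|T|)%N -> p = 0.
Proof.
move=> rootT hT; apply: (@roots_geq_poly_eq0 _ p (enum T)).
- by apply/allP => x; rewrite mem_enum; apply: rootT.
- exact: enum_uniq.
- by rewrite -cardE.
Qed.

Theorem lemmaA4 (F : finFieldType) (K : realFieldType) (d D : nat) (gamma : K)
  (f : F -> F -> F) (C R : F -> {poly F}) (H : {set F * F}) (S1 S2 : {set F})
  (A : {mpoly F[3]}) :
  0 < gamma ->
  (forall a : F, best_fit d (fun y => f a y) (C a)) ->
  (forall b : F, best_fit d (fun x => f x b) (R b)) ->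
  (forall a b : F, (a, b) \in H -> (C a).[b] = f a b /\ (R b).[a] = f a b) ->
  S1 != set0 ->
  (forall b, b \in S2 ->
     gamma / 2 * (#|S1|%:R) <= (#|[set a in S1 | (a, b) \in H]|%:R : K)) ->
  (D%:R : K) < gamma / 2 * (#|S1|%:R) ->
  wdeg_le d D A ->
  (forall a, a \in S1 -> subst_col A a (C a) = 0) ->
  forall a b : F, (a, b) \in H -> b \in S2 -> meval (pt3 a b (f a b)) A = 0.
Proof.
move=> _ _ bfR hH _ hS2 hD hA hcol a b hab hb.
have row0 : subst_row A b (R b) = 0.
  apply: (@poly_eq0_card_roots _ _ [set x in S1 | (x, b) \in H]).
    move=> x; rewrite inE => /andP[hx hxb]; have [Cx Rb] := hH _ _ hxb.
    by rewrite /root horner_subst_row Rb -Cx -horner_subst_col hcol ?horner0.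
  have [sRb _] := bfR b.
  apply: leq_trans (size_subst_row b hA sRb) _.
  by rewrite -(ltr_nat K) (lt_le_trans hD (hS2 b hb)).
have [_ <-] := hH _ _ hab.
by rewrite -horner_subst_row row0 horner0.
Qed.
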